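(* In the coding module below, if the field size satisfies $q\ge n$, then for each $j$ a value $\alpha_j\in\mathbb{F}_q$ satisfying the module's requirement exists, and the resulting linear combination $\mathbf{g}$ has the property that every receiver whose next unseen packet has arrived at the sender and that successfully receives $\mathbf{g}$ sees its next unseen packet.
   Context: A sender holds packets $\mathbf{p}_1,\mathbf{p}_2,\dots$ (vectors over $\mathbb{F}_q$, indexed by arrival order) and broadcasts linear combinations to $n$ receivers; via feedback it knows each receiver's knowledge space (the set of linear combinations of packets the receiver can compute). A receiver has seen $\mathbf{p}_k$ if it can compute $\mathbf{p}_k+\mathbf{q}$ where $\mathbf{q}$ is a linear combination of packets with index greater than $k$. If receiver $r$ has seen $\mathbf{p}_k$, its witness $\mathbf{W}_r(\mathbf{p}_k)$ is the unique linear combination known to $r$ of the form $\mathbf{p}_k+\mathbf{q}$ where $\mathbf{q}$ involves only packets of index greater than $k$ that $r$ has not seen. A receiver's next unseen packet is its lowest-index unseen packet. Coding module: let $u_1<\dots<u_m$ be the distinct indices of the next unseen packets of the receivers whose next unseen packet has arrived at the sender, and $R(u_i)$ the set of such receivers whose next unseen packet is $\mathbf{p}_{u_i}$. For $j=1$ to $m$: for each $r\in R(u_j)$ (which has seen $\mathbf{p}_{u_i}$ for all $i<j$), let $\mathbf{y}_r=\sum_{i=1}^{j-1}\alpha_i\mathbf{W}_r(\mathbf{p}_{u_i})$, and pick $\alpha_j\in\mathbb{F}_q$ different from the coefficient of $\mathbf{p}_{u_j}$ in $\mathbf{y}_r$ for every $r\in R(u_j)$. Transmit $\mathbf{g}=\sum_{i=1}^m\alpha_i\mathbf{p}_{u_i}$.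 *)

From HB Require Import structures.
From mathcomp Require Import all_boot all_order all_algebra.
Set Implicit Arguments. Unset Strict Implicit. Unset Printing Implicit Defensive.
Import GRing.Theory.
Local Open Scope ring_scope.

(* Packets that have arrived at the sender: p_0, ..., p_(N-1) (0-based,
   in arrival order).  A linear combination of them is its coefficient row
   vector in 'rV[F]_N.  A receiver's knowledge space is the row space of a
   matrix K : 'M[F]_N. *)

Section Defs.
Variables (F : finFieldType) (N : nat).

Definition seenb (K : 'M[F]_N) (k : 'I_N) : bool :=
  [exists v : 'rV[F]_N, [&& (v <= K)%MS, v 0 k == 1 &
      [forall i : 'I_N, (i < k)%N ==> (v 0 i == 0)]]].

Definition witnessb (K : 'M[F]_N) (k : 'I_N) (w : 'rV[F]_N) : bool :=
  [&& (w <= K)%MS, w 0 k == 1 &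
      [forall i : 'I_N, ((i < k)%N || ((k < i)%N && seenb K i)) ==> (w 0 i == 0)]].

Definition witness (K : 'M[F]_N) (k : 'I_N) : 'rV[F]_N :=
  odflt 0 [pick w | witnessb K k w].

Definition is_nus (K : 'M[F]_N) (k : 'I_N) : bool :=
  ~~ seenb K k && [forall i : 'I_N, (i < k)%N ==> seenb K i].

Variable n : nat.
Variable Kn : 'I_n -> 'M[F]_N.

Definition nus_set : {set 'I_N} := [set k | [exists r : 'I_n, is_nus (Kn r) k]].

Definition ycomb (r : 'I_n) (alpha : 'I_N -> F) (u : 'I_N) : 'rV[F]_N :=
  \sum_(v in nus_set | (v < u)%N) alpha v *: witness (Kn r) v.

Definition gcomb (alpha : 'I_N -> F) : 'rV[F]_N :=
  \row_k (if k \in nus_set then alpha k else 0).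

Definition alpha_ok (alpha : 'I_N -> F) (u : 'I_N) (a : F) : bool :=
  [forall r : 'I_n, is_nus (Kn r) u ==> (a != ycomb r alpha u 0 u)].

End Defs.

From mathcomp Require Import all_boot all_order all_algebra.
Import GRing.Theory.
Local Open Scope ring_scope.

(* Existence: alpha_u must avoid the values y_r(u) for the receivers r whose
   next unseen packet is p_u.  If some smaller u_i is the next unseen packet
   of another receiver, fewer than n <= q values are forbidden; otherwise
   every y_r vanishes and alpha_u := 1 works.
   Innovativeness: for receiver r with next unseen packet p_u, all packets
   below u are seen, so its witnesses W_r(p_v), v < u, have coordinate
   delta_{vi} at every i < u.  Hence y_r agrees with g below u, and
   g - y_r, which r can compute after receiving g, is zero below u and has
   coordinate alpha_u - y_r(u) <> 0 at u. *)

Section Witness.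
Context {F : finFieldType} {N : nat} {K : 'M[F]_N}.

Lemma seenbP (k : 'I_N) :
  reflect (exists v : 'rV[F]_N,
             [/\ (v <= K)%MS, v 0 k = 1 & forall i : 'I_N, (i < k)%N -> v 0 i = 0])
          (seenb K k).
Proof.
apply: (iffP existsP) => [[v /and3P[vK /eqP vk /forallP vlt]] | [v [vK vk vlt]]].
  by exists v; split=> // i /(implyP (vlt i))/eqP.
by exists v; rewrite vK vk eqxx; apply/forallP => i; apply/implyP => /vlt ->.
Qed.

Lemma witnessbP (k : 'I_N) (w : 'rV[F]_N) :
  reflect [/\ (w <= K)%MS, w 0 k = 1 &
             forall i : 'I_N, (i < k)%N || (k < i)%N && seenb K i -> w 0 i = 0]
          (witnessb K k w).
Proof.
apply: (iffP and3P) => [[wK /eqP wk /forallP wz] | [wK wk wz]].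
  by split=> // i /(implyP (wz i))/eqP.
by split=> //; [rewrite wk | apply/forallP => i; apply/implyP => /wz ->].
Qed.

Lemma seenb_lead (k : 'I_N) (v : 'rV[F]_N) :
  (v <= K)%MS -> v 0 k != 0 -> (forall i : 'I_N, (i < k)%N -> v 0 i = 0) ->
  seenb K k.
Proof.
move=> vK vk vlt; apply/seenbP; exists ((v 0 k)^-1 *: v); split.
- exact: scalemx_sub.
- by rewrite mxE mulVf.
- by move=> i /vlt; rewrite mxE => ->; rewrite mulr0.
Qed.

(* Gaussian elimination: coordinate t of a row is cleared by subtracting a
   multiple of a row showing p_t seen, which leaves coordinates < t intact. *)
Lemma seen_cleared_below (k : 'I_N) (t : nat) : seenb K k ->
  exists w : 'rV[F]_N, [/\ (w <= K)%MS, w 0 k = 1 &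
    forall i : 'I_N, (i < k)%N || [&& (k < i)%N, (i < t)%N & seenb K i] -> w 0 i = 0].
Proof.
move=> /seenbP[v [vK vk vlt]]; elim: t => [|t [w [wK wk wz]]].
  by exists v; split=> // i /orP[/vlt //|/and3P[_]].
have [tN|Nt] := ltnP t N; last first.
  exists w; split=> // i /orP[ik|/and3P[ki _ si]]; apply: wz; first by rewrite ik.
  by rewrite ki si (leq_trans (ltn_ord i) Nt) orbT.
pose t' := Ordinal tN.
have [/andP[kt /seenbP[s [sK st slt]]]|no_elim] := boolP ((k < t)%N && seenb K t').
  pose w' := w - w 0 t' *: s.
  have w'_lt (i : 'I_N) : (i < t)%N -> w' 0 i = w 0 i.
    by move=> it; rewrite !mxE slt // mulr0 subr0.
  exists w'; split; first by rewrite addmx_sub ?eqmx_opp ?scalemx_sub.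
    by rewrite w'_lt.
  move=> i /orP[ik|/and3P[ki]].
    by rewrite w'_lt ?wz ?ik // (ltn_trans ik kt).
  rewrite ltnS leq_eqVlt => /orP[/eqP it _|it si].
    have -> : i = t' by apply: val_inj.
    by rewrite !mxE st mulr1 subrr.
  by rewrite w'_lt ?wz ?ki ?it ?si ?orbT.
exists w; split=> // i /orP[ik|/and3P[ki]]; first by rewrite wz ?ik.
rewrite ltnS leq_eqVlt => /orP[/eqP it si|it si]; last by rewrite wz ?ki ?it ?si ?orbT.
have it' : i = t' by apply: val_inj.
by move: no_elim; rewrite -it' si andbT -it ki.
Qed.

Lemma witnessb_witness (k : 'I_N) : seenb K k -> witnessb K k (witness K k).
Proof.
move=> /(seen_cleared_below k N)[w [wK wk wz]].
rewrite /witness; case: pickP => [//|no_witness].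
move: (no_witness w) => /witnessbP[]; split=> // i /orP[ik|/andP[ki si]].
  by rewrite wz ?ik.
by rewrite wz ?ki ?si ?ltn_ord ?orbT.
Qed.

Lemma witnessb_coord {k i : 'I_N} {w : 'rV[F]_N} :
  witnessb K k w -> (i <= k)%N || seenb K i -> w 0 i = (i == k)%:R.
Proof.
move=> /witnessbP[_ wk wz]; case: ltngtP => [ik _|ki /= si|/val_inj ->].
- by rewrite wz ?ik // -val_eqE /= ltn_eqF.
- by rewrite wz ?ki ?si ?orbT // -val_eqE /= gtn_eqF.
- by rewrite wk eqxx.
Qed.

Lemma is_nus_seen {u v : 'I_N} : is_nus K u -> (v < u)%N -> seenb K v.
Proof. by move=> /andP[_ /forallP/(_ v)/implyP]. Qed.

Lemma is_nus_leq {u v : 'I_N} : is_nus K u -> is_nus K v -> (u <= v)%N.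
Proof.
move=> nus_u /andP[unseen_v _]; rewrite leqNgt; apply: contra unseen_v.
exact: is_nus_seen.
Qed.

End Witness.

Section Innovative.
Context {F : finFieldType} {N n : nat} {K : 'I_n -> 'M[F]_N}.
Context {alpha : 'I_N -> F} {r : 'I_n} {u : 'I_N}.
Hypothesis nus_u : is_nus (K r) u.

Lemma is_nus_nus_set : u \in nus_set K.
Proof. by rewrite inE; apply/existsP; exists r. Qed.

Let witness_lt {v : 'I_N} : (v < u)%N -> witnessb (K r) v (witness (K r) v).
Proof. by move=> /(is_nus_seen nus_u)/witnessb_witness. Qed.

Lemma ycomb_sub : (ycomb K r alpha u <= K r)%MS.
Proof.
apply: summx_sub => v /andP[_ vu]; apply: scalemx_sub.
by case/witnessbP: (witness_lt vu).
Qed.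

Lemma ycomb_coord_lt (i : 'I_N) :
  (i < u)%N -> ycomb K r alpha u 0 i = gcomb K alpha 0 i.
Proof.
move=> iu; rewrite summxE mxE.
rewrite (eq_bigr (fun v => if v == i then alpha v else 0)); last first.
  move=> v /andP[_ vu]; rewrite mxE (witnessb_coord (witness_lt vu)).
    by rewrite eq_sym; case: eqP => _; rewrite ?mulr1 ?mulr0.
  by rewrite (is_nus_seen nus_u iu) orbT.
rewrite -big_mkcondr /=; have [i_nus|i_nus] := boolP (i \in nus_set K).
  by rewrite (big_pred1 i) // => v /=; case: eqP => [->|]; rewrite ?i_nus ?iu ?andbF.
by rewrite big_pred0 // => v; case: eqP => [->|]; rewrite ?(negbTE i_nus) ?andbF.
Qed.

Lemma gcomb_innovative : alpha_ok K alpha u (alpha u) ->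
  seenb (K r + gcomb K alpha)%MS u.
Proof.
move=> /forallP/(_ r)/implyP/(_ nus_u) alpha_u_ok.
apply: (seenb_lead _ (gcomb K alpha - ycomb K r alpha u)).
- rewrite addmx_sub ?eqmx_opp ?addsmxSr //.
  exact: submx_trans ycomb_sub (addsmxSl _ _).
- by rewrite !mxE is_nus_nus_set subr_eq0.
- by move=> i iu; rewrite [LHS]mxE [X in _ + X]mxE ycomb_coord_lt // subrr.
Qed.

End Innovative.

Lemma exists_notin_imset {I T : finType} (f : I -> T) {S : {set I}} :
  (#|S| < #|T|)%N -> exists a : T, a \notin f @: S.
Proof.
move=> small_S; case: (pickP [pred a | a \notin f @: S]) => [a a_new|all_hit].
  by exists a.
suff : (#|T| <= #|S|)%N by rewrite leqNgt small_S.
apply: leq_trans (leq_imset_card f S); rewrite -cardsT; apply: subset_leq_card.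
by apply/subsetP => a _; move: (all_hit a) => /negbFE.
Qed.

Lemma alpha_ok_exists (F : finFieldType) (n N : nat) (K : 'I_n -> 'M[F]_N)
    (beta : 'I_N -> F) (u : 'I_N) :
  (n <= #|F|)%N -> exists a : F, alpha_ok K beta u a.
Proof.
move=> n_le_q.
pose S := [set r | is_nus (K r) u].
have [/existsP[v /andP[]]|no_nus_below] :=
  boolP [exists v, (v \in nus_set K) && (v < u)%N].
  rewrite inE => /existsP[r' nus_v] vu.
  have r'_notin_S : r' \notin S.
    by rewrite inE; apply: contraL vu => /is_nus_leq/(_ nus_v); rewrite leqNgt.
  have small_S : (#|S| < #|F|)%N.
    suff /proper_card : S \proper [set: 'I_n].
      by rewrite cardsT card_ord => /leq_trans; apply.
    by rewrite properT; apply: contraNneq r'_notin_S => ->; rewrite inE.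
  have [a a_new] := exists_notin_imset (fun r => ycomb K r beta u 0 u) small_S.
  exists a; apply/forallP => r; apply/implyP => nus_r.
  by apply: contraNneq a_new => ->; apply: imset_f; rewrite inE.
exists 1; apply/forallP => r; apply/implyP => _.
rewrite /ycomb big_pred0 ?mxE ?oner_neq0 // => v.
by apply/negbTE; move: no_nus_below; rewrite negb_exists => /forallP.
Qed.

Theorem theorem8 (F : finFieldType) (n N : nat) (K : 'I_n -> 'M[F]_N) :
  (n <= #|F|)%N ->
  (forall u : 'I_N, u \in nus_set K ->
     forall beta : 'I_N -> F, exists a : F, alpha_ok K beta u a) /\
  (forall alpha : 'I_N -> F,
     (forall u : 'I_N, u \in nus_set K -> alpha_ok K alpha u (alpha u)) ->
     forall (r : 'I_n) (u : 'I_N), is_nus (K r) u ->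
       seenb (K r + gcomb K alpha)%MS u).
Proof.
move=> n_le_q; split=> [u u_nus beta | alpha alpha_ok_all r u nus_u].
  exact: alpha_ok_exists.
exact: gcomb_innovative nus_u (alpha_ok_all u (is_nus_nus_set nus_u)).
Qed.
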